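(* Let $\boldsymbol{X}$ be an $\boldsymbol{\mathcal{L}}_\Lambda$ modal space, where $\mathcal{L}$ is based on a finite atom set $\Phi$ and modal equivalence and bisimilarity coincide on $X$. Then $\mathcal{D}_{\boldsymbol{X}}$ contains a metric $d_w$ inducing the same topology on $\boldsymbol{X}$ as the $n$-bisimulation metric $d_B$.
   Context: Given a set $\Phi$ of atoms and a finite set $I$ of agents, $\mathcal{L}$ is the modal language $\varphi::=\top\mid p\mid\neg\varphi\mid\varphi\wedge\varphi\mid\square_i\varphi$. A logic $\Lambda$ is a normal modal logic over $\mathcal{L}$ extending $K$; $\boldsymbol{\varphi}$ is the class of formulas $\Lambda$-equivalent to $\varphi$ and $\boldsymbol{\mathcal{L}}_\Lambda$ the set of such classes. Kripke models have countable nonempty state sets, relations $R_i$ ($i\in I$) and a valuation; pointed models are evaluated with standard semantics. For a set $X$ of pointed Kripke models, the $\boldsymbol{\mathcal{L}}_\Lambda$ modal space is $\boldsymbol{X}=\{\boldsymbol{x}:x\in X\}$ with $\boldsymbol{x}=\{y\in X:y\vDash\varphi\text{ iff }x\vDash\varphi\text{ for all }\varphi\}$. The $n$-bisimulation metric is $d_B(\boldsymbol{x},\boldsymbol{y})=0$ if $x,y$ are $n$-bisimilar for all $n\in\mathbb{N}_0$, and $2^{-n}$ for the least $n$ such that $x,y$ are not $n$-bisimilar. Metric family: let $D\subseteq\boldsymbol{\mathcal{L}}_\Lambda$ be such that for every $\boldsymbol{\psi}$ there is a finite $D_\psi\subseteq D$ such that any $x,y\in X$ satisfying exactly the same elements of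 $D_\psi$ agree on $\psi$; enumerate $D$ as $\boldsymbol{\varphi}_1,\boldsymbol{\varphi}_2,\dots$; let $d_k(\boldsymbol{x},\boldsymbol{y})=0$ if ($x\vDash\varphi_k$ iff $y\vDash\varphi_k$) and $1$ otherwise; let $w:D\to\mathbb{R}_{>0}$ have $\sum_k w(\boldsymbol{\varphi}_k)<\infty$; and set $d_w=\sum_k w(\boldsymbol{\varphi}_k)d_k$. $\mathcal{D}_{\boldsymbol{X}}$ is the set of all such $d_w$. *)

From Stdlib Require Import Reals List Arith ClassicalEpsilon.
From Coquelicot Require Import Coquelicot.
Open Scope R_scope.
Set Implicit Arguments.


Section Modal.
Variables (Atm Ag : Type).

Inductive form : Type :=
| FTop : form
| FAtom : Atm -> form
| FNeg : form -> form
| FAnd : form -> form -> form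
| FBox : Ag -> form -> form.

Definition FImpl (f g : form) : form := FNeg (FAnd f (FNeg g)).
Definition FIff (f g : form) : form := FAnd (FImpl f g) (FImpl g f).

(** Propositional tautologies: true under every boolean valuation of the
    atoms and of the boxed subformulas (treated as propositional letters). *)
Fixpoint peval (v : form -> bool) (f : form) : bool :=
  match f with
  | FTop => true
  | FAtom p => v (FAtom p)
  | FNeg g => negb (peval v g)
  | FAnd g h => andb (peval v g) (peval v h)
  | FBox i g => v (FBox i g)
  end.

Definition tautology (f : form) : Prop := forall v, peval v f = true.

Fixpoint subst (s : Atm -> form) (f : form) : form :=
  match f with
  | FTop => FTop
  | FAtom p => s p
  | FNeg g => FNeg (subst s g)
  | FAnd g h => FAnd (subst s g) (subst s h)
  | FBox i g => FBox i (subst s g)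
  end.

Definition normal_logic (L : form -> Prop) : Prop :=
  (forall f, tautology f -> L f) /\
  (forall i f g, L (FImpl (FBox i (FImpl f g)) (FImpl (FBox i f) (FBox i g)))) /\
  (forall f g, L (FImpl f g) -> L f -> L g) /\
  (forall i f, L f -> L (FBox i f)) /\
  (forall s f, L f -> L (subst s f)).

Definition lequiv (L : form -> Prop) (f g : form) : Prop := L (FIff f g).

Record model : Type := Model {
  st : Type;
  rel : Ag -> st -> st -> Prop;
  val : st -> Atm -> Prop;
  st_countable : exists c : st -> nat, forall s t, c s = c t -> s = t;
  st_nonempty : inhabited st
}.

Record pointed : Type := Pointed { pmod : model; ppt : st pmod }.

Fixpoint sat (M : model) (s : st M) (f : form) : Prop :=
  match f with
  | FTop => True
  | FAtom p => val M s p
  | FNeg g => ~ sat M s g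
  | FAnd g h => sat M s g /\ sat M s h
  | FBox i g => forall t, rel M i s t -> sat M t g
  end.

Definition psat (x : pointed) (f : form) : Prop := sat (pmod x) (ppt x) f.

Definition modeq (x y : pointed) : Prop := forall f, psat x f <-> psat y f.

Definition bisimilar (x y : pointed) : Prop :=
  exists Z : st (pmod x) -> st (pmod y) -> Prop,
    Z (ppt x) (ppt y) /\
    forall s t, Z s t ->
      (forall p, val (pmod x) s p <-> val (pmod y) t p) /\
      (forall i s', rel (pmod x) i s s' -> exists t', rel (pmod y) i t t' /\ Z s' t') /\
      (forall i t', rel (pmod y) i t t' -> exists s', rel (pmod x) i s s' /\ Z s' t').

Fixpoint nbisim (M N : model) (n : nat) (s : st M) (t : st N) : Prop :=
  (forall p, val M s p <-> val N t p) /\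
  match n with
  | O => True
  | S m =>
      (forall i s', rel M i s s' -> exists t', rel N i t t' /\ nbisim M N m s' t') /\
      (forall i t', rel N i t t' -> exists s', rel M i s s' /\ nbisim M N m s' t')
  end.

Definition pnbisim (n : nat) (x y : pointed) : Prop :=
  @nbisim (pmod x) (pmod y) n (ppt x) (ppt y).

Definition least_non_bisim (x y : pointed) : nat :=
  epsilon (inhabits 0%nat)
    (fun n => ~ pnbisim n x y /\ forall m, (m < n)%nat -> pnbisim m x y).

Definition dB (x y : pointed) : R :=
  if excluded_middle_informative (forall n, pnbisim n x y) then 0
  else (/ 2) ^ (least_non_bisim x y).

Definition open_in (X : pointed -> Prop) (d : pointed -> pointed -> R)
  (U : pointed -> Prop) : Prop :=
  (forall x, U x -> X x) /\
  forall x, U x -> exists eps, 0 < eps /\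
    forall y, X y -> d x y < eps -> U y.

Definition same_topology (X : pointed -> Prop)
  (d1 d2 : pointed -> pointed -> R) : Prop :=
  forall U, open_in X d1 U <-> open_in X d2 U.

(** D is enumerated (injectively up to Lambda-equivalence)
    by representatives phi_k for the indices k valid w.r.t. len
    (len = None: infinitely many, len = Some N: indices k < N). *)
Definition validb (len : option nat) (k : nat) : bool :=
  match len with None => true | Some N => Nat.ltb k N end.

Definition dk (x y : pointed) (f : form) : R :=
  if excluded_middle_informative (psat x f <-> psat y f) then 0 else 1.

Definition dw (len : option nat) (phi : nat -> form) (w : nat -> R)
  (x y : pointed) : R :=
  Series (fun k => if validb len k then w k * dk x y (phi k) else 0).

Definition in_metric_family (L : form -> Prop) (X : pointed -> Prop)
  (d : pointed -> pointed -> R) : Prop :=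
  exists (len : option nat) (phi : nat -> form) (w : nat -> R),
    (forall j k, validb len j = true -> validb len k = true -> j <> k ->
        ~ lequiv L (phi j) (phi k)) /\
    (forall psi, exists Dpsi : list nat,
        (forall k, In k Dpsi -> validb len k = true) /\
        forall x y, X x -> X y ->
          (forall k, In k Dpsi -> (psat x (phi k) <-> psat y (phi k))) ->
          (psat x psi <-> psat y psi)) /\
    (forall k, validb len k = true -> 0 < w k) /\
    ex_series (fun k => if validb len k then w k else 0) /\
    (forall x y, X x -> X y -> d x y = dw len phi w x y).

End Modal.

From Stdlib Require Import Reals List Lia Lra Classical ClassicalEpsilon Cantor Wf_nat.
From Coquelicot Require Import Coquelicot.
Open Scope R_scope.
Set Implicit Arguments.

(* With finitely many atoms and agents, each depth n has a finite list of
   characteristic formulas: a valuation type conjoined, for every agent i, with a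
   box part saying which depth-(n-1) characteristic formulas the i-successors
   realise.  Every pointed model satisfies one of them, two pointed models
   satisfying the same one are n-bisimilar, and n-bisimilar models agree on all
   formulas of modal depth at most n.
   Enumerate the characteristic formulas of all depths, keep one representative
   per class of equivalence on X, and give the k-th representative weight 2^-k.
   Agreement on the first K representatives gives d_w <= 2^-K, and it is implied
   by m-bisimilarity for m their maximal depth; conversely d_w < 2^-j forces
   agreement on the j-th representative, which may be chosen to be a depth-n
   characteristic formula of the centre, so d_B < 2^-n. *)

Section ListCombinatorics.
Variable A : Type.

Fixpoint choices (ls : list (list A)) : list (list A) :=
  match ls with
  | nil => nil :: nil
  | l :: ls' => flat_map (fun a => map (cons a) (choices ls')) l
  end.

Lemma In_choices ls c : In c (choices ls) <-> Forall2 (@In A) c ls.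
Proof.
  split.
  - revert c; induction ls as [|l ls IH]; simpl; intros c Hc.
    + destruct Hc as [<-|[]]; constructor.
    + apply in_flat_map in Hc as [a [Ha Hc]].
      apply in_map_iff in Hc as [c' [<- Hc']]; constructor; auto.
  - induction 1; simpl; auto.
    apply in_flat_map; exists x; split; auto; apply in_map; auto.
Qed.

Lemma Forall2_In_map_inv {B} {G : B -> list A} {cs l i} :
  Forall2 (@In A) cs (map G l) -> In i l -> exists c, In c (G i) /\ In c cs.
Proof.
  revert cs; induction l as [|b l IH]; simpl; intros cs H Hi; [destruct Hi|].
  destruct cs as [|x cs']; [inversion H|].
  apply Forall2_cons_iff in H as [Hx Hl].
  destruct Hi as [<-|Hi].
  - exists x; simpl; auto.
  - destruct (IH cs' Hl Hi) as [c [H1 H2]]; exists c; simpl; auto.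
Qed.

Lemma Forall2_In_map {B} (g : B -> A) (G : B -> list A) l :
  (forall i, In (g i) (G i)) -> Forall2 (@In A) (map g l) (map G l).
Proof. intro H; induction l; simpl; constructor; auto. Qed.

Fixpoint powerset (l : list A) : list (list A) :=
  match l with
  | nil => nil :: nil
  | a :: l' => map (cons a) (powerset l') ++ powerset l'
  end.

Lemma powerset_incl l S : In S (powerset l) -> incl S l.
Proof.
  revert S; induction l as [|a l IH]; simpl; intros S H.
  - destruct H as [<-|[]]; intros x [].
  - apply in_app_or in H; destruct H as [H|H].
    + apply in_map_iff in H; destruct H as [S' [<- H]].
      intros x [<-|Hx]; simpl; auto.
      right; exact (IH _ H x Hx).
    + intros x Hx; right; exact (IH _ H x Hx).
Qed.

Lemma filter_In_powerset (p : A -> bool) l : In (filter p l) (powerset l).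
Proof.
  induction l as [|a l IH]; simpl; auto.
  destruct (p a); apply in_or_app; [left; apply in_map|right]; auto.
Qed.

Lemma list_choice {B} (P : A -> B -> Prop) l :
  (forall a, In a l -> exists b, P a b) ->
  exists D, (forall b, In b D -> exists a, In a l /\ P a b) /\
            (forall a, In a l -> exists b, In b D /\ P a b).
Proof.
  induction l as [|a l IH]; intro H.
  - exists nil; split; [intros b []|intros a []].
  - destruct (H a (or_introl eq_refl)) as [b Hb].
    destruct IH as [D [H1 H2]]; [intros; apply H; right; auto|].
    exists (b :: D); split.
    + intros b' [<-|Hb']; [exists a; simpl; auto|].
      destruct (H1 b' Hb') as [a' [? ?]]; exists a'; simpl; auto.
    + intros a' [<-|Ha']; [exists b; simpl; auto|].
      destruct (H2 a' Ha') as [b' [? ?]]; exists b'; simpl; auto.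
Qed.

End ListCombinatorics.

Section CharacteristicFormulas.
Variables (Atm Ag : Type).
Notation form := (form Atm Ag).

Definition conj (l : list form) : form := fold_right (@FAnd Atm Ag) (FTop Atm Ag) l.
Definition disj (l : list form) : form := FNeg (conj (map (@FNeg Atm Ag) l)).
Definition dia (i : Ag) (f : form) : form := FNeg (FBox i (FNeg f)).

Lemma sat_conj M s l : sat M s (conj l) <-> forall f, In f l -> sat M s f.
Proof.
  induction l as [|a l IH]; simpl.
  - split; [intros _ f []|auto].
  - rewrite IH; split.
    + intros [H1 H2] f [<-|Hf]; auto.
    + intros H; split; auto.
Qed.

Lemma sat_disj M s l : sat M s (disj l) <-> exists f, In f l /\ sat M s f.
Proof.
  unfold disj; simpl; rewrite sat_conj; split.
  - intro H; apply NNPP; intro H'; apply H; intros g Hg.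
    apply in_map_iff in Hg; destruct Hg as [f [<- Hf]]; simpl; intro; apply H'; eauto.
  - intros [f [Hf Hs]] H; apply (H (FNeg f)); [apply in_map; auto | simpl; auto].
Qed.

Lemma sat_dia M s i f : sat M s (dia i f) <-> exists t, rel M i s t /\ sat M t f.
Proof.
  unfold dia; simpl; split.
  - intro H; apply NNPP; intro H'; apply H; intros t Ht Hs; apply H'; eauto.
  - intros [t [Ht Hs]] H; exact (H t Ht Hs).
Qed.

Variables (la : list Atm) (lg : list Ag).
Hypothesis Hla : forall p, In p la.
Hypothesis Hlg : forall i, In i lg.

Definition literals : list (list form) :=
  map (fun p => FAtom Ag p :: FNeg (FAtom Ag p) :: nil) la.

Definition valuation_types : list form := map conj (choices literals).

Definition box_part (i : Ag) (S : list form) : form :=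
  FAnd (conj (map (dia i) S)) (FBox i (disj S)).

Fixpoint char_forms (n : nat) : list form :=
  match n with
  | O => valuation_types
  | S m => flat_map (fun v => map (fun cs => conj (v :: cs))
             (choices (map (fun i => map (box_part i) (powerset (char_forms m))) lg)))
             valuation_types
  end.

Lemma valuation_type_val v M N s t :
  In v valuation_types -> sat M s v -> sat N t v -> forall p, val M s p <-> val N t p.
Proof.
  unfold valuation_types; intros Hv Hs Ht p.
  apply in_map_iff in Hv; destruct Hv as [c [<- Hc]].
  apply In_choices in Hc; unfold literals in Hc; rewrite sat_conj in Hs, Ht.
  destruct (Forall2_In_map_inv Hc (Hla p)) as [f [Hf Hfc]].
  specialize (Hs f Hfc); specialize (Ht f Hfc).
  destruct Hf as [<-|[<-|[]]]; simpl in *; tauto.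
Qed.

Lemma valuation_type_exists M s : exists v, In v valuation_types /\ sat M s v.
Proof.
  pose (lit p := if excluded_middle_informative (val M s p) then FAtom Ag p
                 else FNeg (FAtom Ag p)).
  exists (conj (map lit la)); split.
  - apply in_map, In_choices; unfold literals.
    apply Forall2_In_map; intro p; unfold lit.
    destruct (excluded_middle_informative (val M s p)); simpl; auto.
  - apply sat_conj; intros f Hf; apply in_map_iff in Hf; destruct Hf as [p [<- _]].
    unfold lit; destruct (excluded_middle_informative (val M s p)); simpl; auto.
Qed.

Lemma box_part_match {i S M N s t s'} :
  sat M s (FBox i (disj S)) -> sat N t (conj (map (dia i) S)) -> rel M i s s' ->
  exists t' chi, rel N i t t' /\ In chi S /\ sat M s' chi /\ sat N t' chi.
Proof.
  intros Hbox Hdia Hss'.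
  specialize (Hbox s' Hss'); apply sat_disj in Hbox; destruct Hbox as [chi [Hchi Hs'chi]].
  rewrite sat_conj in Hdia; specialize (Hdia (dia i chi) (in_map _ _ _ Hchi)).
  apply sat_dia in Hdia; destruct Hdia as [t' [Htt' Ht'chi]].
  exists t', chi; auto.
Qed.

Lemma char_forms_nbisim {n chi M N s t} :
  In chi (char_forms n) -> sat M s chi -> sat N t chi -> nbisim M N n s t.
Proof.
  revert chi M N s t; induction n as [|n IH]; simpl; intros chi M N s t Hchi Hs Ht.
  - split; [intro p; eapply valuation_type_val; eauto|exact I].
  - apply in_flat_map in Hchi; destruct Hchi as [v [Hv Hchi]].
    apply in_map_iff in Hchi; destruct Hchi as [cs [<- Hcs]]; apply In_choices in Hcs.
    destruct Hs as [Hsv Hs], Ht as [Htv Ht]; rewrite sat_conj in Hs, Ht.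
    assert (Hbox : forall i, exists S, incl S (char_forms n) /\
                     sat M s (box_part i S) /\ sat N t (box_part i S)).
    { intro i; destruct (Forall2_In_map_inv Hcs (Hlg i)) as [c [Hc Hccs]].
      apply in_map_iff in Hc; destruct Hc as [S [<- HS]].
      exists S; split; [exact (powerset_incl _ _ HS)|auto]. }
    split; [intro p; eapply valuation_type_val; eauto|split].
    + intros i s' Hss'; destruct (Hbox i) as [S [HS [[_ HsS] [HtS _]]]].
      destruct (box_part_match HsS HtS Hss') as [t' [chi [? [Hchi [? ?]]]]].
      exists t'; split; auto; apply (IH chi); auto.
    + intros i t' Htt'; destruct (Hbox i) as [S [HS [[HsS _] [_ HtS]]]].
      destruct (box_part_match HtS HsS Htt') as [s' [chi [? [Hchi [? ?]]]]].
      exists s'; split; auto; apply (IH chi); auto.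
Qed.

Lemma char_forms_cover n {M} s : exists chi, In chi (char_forms n) /\ sat M s chi.
Proof.
  revert M s; induction n as [|n IH]; intros M s; [exact (valuation_type_exists M s)|].
  destruct (valuation_type_exists M s) as [v [Hv Hsv]].
  pose (succ_types i := filter (fun chi => if excluded_middle_informative
          (exists s', rel M i s s' /\ sat M s' chi) then true else false) (char_forms n)).
  exists (conj (v :: map (fun i => box_part i (succ_types i)) lg)); split.
  - apply in_flat_map; exists v; split; auto.
    apply (in_map (fun cs => conj (v :: cs))), In_choices, Forall2_In_map.
    intro i; apply in_map, filter_In_powerset.
  - apply sat_conj; intros f [<-|Hf]; auto.
    apply in_map_iff in Hf; destruct Hf as [i [<- _]]; split.
    + apply sat_conj; intros g Hg; apply in_map_iff in Hg; destruct Hg as [chi [<- Hchi]].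
      apply sat_dia; unfold succ_types in Hchi; apply filter_In in Hchi.
      destruct Hchi as [_ H]; destruct (excluded_middle_informative _); [auto|discriminate].
    + intros s' Hss'; apply sat_disj.
      destruct (IH M s') as [chi [Hchi Hs'chi]].
      exists chi; split; auto; unfold succ_types; apply filter_In; split; auto.
      destruct (excluded_middle_informative _) as [|C]; auto; exfalso; apply C; eauto.
Qed.

End CharacteristicFormulas.

Section ModalDepth.
Variables (Atm Ag : Type).

Fixpoint depth (f : form Atm Ag) : nat :=
  match f with
  | FTop => 0
  | FAtom _ => 0
  | FNeg g => depth g
  | FAnd g h => Nat.max (depth g) (depth h)
  | FBox _ g => S (depth g)
  end.

Lemma nbisim_sat f {n M N s t} :
  (depth f <= n)%nat -> @nbisim Atm Ag M N n s t -> (sat M s f <-> sat N t f).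
Proof.
  revert n M N s t.
  induction f as [| p | g IH | g IHg h IHh | i g IH]; simpl; intros n M N s t Hd Hb.
  - tauto.
  - destruct n; apply Hb.
  - rewrite (IH _ _ _ _ _ Hd Hb); tauto.
  - rewrite (IHg n M N s t), (IHh n M N s t) by (auto; lia); tauto.
  - destruct n as [|m]; [lia|]; destruct Hb as [_ [Hforth Hback]]; split.
    + intros H t' Htt'; destruct (Hback i t' Htt') as [s' [Hss' Hb']].
      apply (IH m M N s' t'); auto; lia.
    + intros H s' Hss'; destruct (Hforth i s' Hss') as [t' [Htt' Hb']].
      apply (IH m M N s' t'); auto; lia.
Qed.

Lemma nbisim_S n M N s t : @nbisim Atm Ag M N (S n) s t -> nbisim M N n s t.
Proof.
  revert M N s t; induction n as [|n IH]; simpl; intros M N s t [Hv [Hforth Hback]].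
  - split; auto.
  - split; auto; split.
    + intros i s' Hss'; destruct (Hforth i s' Hss') as [t' [? ?]]; eauto.
    + intros i t' Htt'; destruct (Hback i t' Htt') as [s' [? ?]]; eauto.
Qed.

Lemma nbisim_le m n M N s t : (m <= n)%nat -> @nbisim Atm Ag M N n s t -> nbisim M N m s t.
Proof. induction 1; auto; intro Hb; apply IHle, nbisim_S, Hb. Qed.

End ModalDepth.

Lemma prefix_upper_bound (f : nat -> nat) K : exists m, forall k, (k <= K)%nat -> (f k <= m)%nat.
Proof.
  induction K as [|K [m Hm]].
  - exists (f O); intros k Hk; replace k with O by lia; lia.
  - exists (Nat.max m (f (S K))); intros k Hk.
    destruct (Nat.eq_dec k (S K)) as [->|Hne]; [lia|].
    specialize (Hm k ltac:(lia)); lia.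
Qed.

Section Representatives.
Variables (A : Type) (E : A -> A -> Prop).
Hypotheses (E_refl : forall a, E a a) (E_sym : forall a b, E a b -> E b a)
  (E_trans : forall a b c, E a b -> E b c -> E a c).
Variable e : nat -> A.

Definition fresh k := forall j, (j < k)%nat -> ~ E (e j) (e k).

Lemma fresh_cover n : exists k, fresh k /\ E (e k) (e n).
Proof.
  induction n as [n IH] using lt_wf_ind.
  destruct (classic (fresh n)) as [H|H]; [exists n; auto|].
  apply not_all_ex_not in H; destruct H as [j H].
  apply imply_to_and in H; destruct H as [Hj H]; apply NNPP in H.
  destruct (IH j Hj) as [k [Hk Ek]]; exists k; split; eauto.
Qed.

(* On fresh indices, [fresh_rank] is the position in the enumeration of representatives. *)
Fixpoint fresh_rank k : nat :=
  match k with
  | O => O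
  | S k => (fresh_rank k + if excluded_middle_informative (fresh k) then 1 else 0)%nat
  end.

Lemma fresh_rank_mono a b : (a <= b)%nat -> (fresh_rank a <= fresh_rank b)%nat.
Proof. induction 1; simpl; lia. Qed.

Lemma fresh_rank_lt a b : fresh a -> (a < b)%nat -> (fresh_rank a < fresh_rank b)%nat.
Proof.
  intros Ha Hab; apply (Nat.lt_le_trans _ (fresh_rank (S a))).
  - simpl; destruct (excluded_middle_informative (fresh a)); [lia|contradiction].
  - apply fresh_rank_mono; lia.
Qed.

Lemma fresh_rank_inj a b : fresh a -> fresh b -> fresh_rank a = fresh_rank b -> a = b.
Proof.
  intros Ha Hb H; destruct (Nat.lt_trichotomy a b) as [h|[h|h]]; auto.
  - pose proof (fresh_rank_lt Ha h); lia.
  - pose proof (fresh_rank_lt Hb h); lia.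
Qed.

Lemma fresh_rank_onto B m :
  (m < fresh_rank B)%nat -> exists k, (k < B)%nat /\ fresh k /\ fresh_rank k = m.
Proof.
  induction B as [|B IH]; simpl; intro H; [lia|].
  destruct (excluded_middle_informative (fresh B)) as [HB|HB].
  - destruct (Nat.eq_dec m (fresh_rank B)) as [->|Hm]; [exists B; auto|].
    destruct (IH ltac:(lia)) as [k [? ?]]; exists k; split; [lia|auto].
  - destruct (IH ltac:(lia)) as [k [? ?]]; exists k; split; [lia|auto].
Qed.

Definition unrank m : nat := epsilon (inhabits O) (fun k => fresh k /\ fresh_rank k = m).

Lemma representatives_of_len len :
  (forall m, validb len m = true -> exists k, fresh k /\ fresh_rank k = m) ->
  (forall k, fresh k -> validb len (fresh_rank k) = true) ->
  exists phi : nat -> A,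
    (forall j k, validb len j = true -> validb len k = true -> j <> k -> ~ E (phi j) (phi k)) /\
    (forall n, exists j, validb len j = true /\ E (e n) (phi j)).
Proof.
  intros Honto Hvalid; exists (fun m => e (unrank m)).
  assert (Hunrank : forall m, validb len m = true -> fresh (unrank m) /\ fresh_rank (unrank m) = m).
  { intros m Hm; unfold unrank; apply epsilon_spec, Honto, Hm. }
  split.
  - intros j k Hj Hk Hjk HE.
    destruct (Hunrank j Hj) as [Fj Rj], (Hunrank k Hk) as [Fk Rk].
    destruct (Nat.lt_trichotomy (unrank j) (unrank k)) as [h|[h|h]].
    + exact (Fk _ h HE).
    + apply Hjk; rewrite <- Rj, <- Rk, h; auto.
    + exact (Fj _ h (E_sym HE)).
  - intro n; destruct (fresh_cover n) as [k [Fk Ek]].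
    exists (fresh_rank k); pose proof (Hvalid k Fk) as V; split; auto.
    destruct (Hunrank _ V) as [Fu Ru]; rewrite (fresh_rank_inj Fu Fk Ru); auto.
Qed.

Lemma fresh_rank_unbounded :
  (forall B, exists k, (B <= k)%nat /\ fresh k) -> forall m, exists K, (m < fresh_rank K)%nat.
Proof.
  intros Hinf m; induction m as [|m [K HK]].
  - destruct (Hinf O) as [k [_ Fk]]; exists (S k).
    pose proof (fresh_rank_lt Fk (Nat.lt_succ_diag_r k)); lia.
  - destruct (Hinf K) as [k [Hk Fk]]; exists (S k).
    pose proof (fresh_rank_lt Fk (Nat.lt_succ_diag_r k)); pose proof (fresh_rank_mono Hk); lia.
Qed.

Lemma representatives : exists (len : option nat) (phi : nat -> A),
  (forall j k, validb len j = true -> validb len k = true -> j <> k -> ~ E (phi j) (phi k)) /\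
  (forall n, exists j, validb len j = true /\ E (e n) (phi j)).
Proof.
  destruct (classic (exists B, forall k, (B <= k)%nat -> ~ fresh k)) as [[B HB]|HB].
  - exists (Some (fresh_rank B)); apply representatives_of_len.
    + intros m Hm; simpl in Hm; apply Nat.ltb_lt in Hm.
      destruct (fresh_rank_onto _ Hm) as [k [_ ?]]; eauto.
    + intros k Fk; simpl; apply Nat.ltb_lt, fresh_rank_lt; auto.
      destruct (Nat.lt_ge_cases k B) as [|Hk]; auto; exfalso; exact (HB k Hk Fk).
  - exists None; apply representatives_of_len; auto.
    intros m _; destruct (@fresh_rank_unbounded) with (m := m) as [K HK].
    + intro B; apply NNPP; intro C; apply HB; exists B; intros k Hk Fk; apply C; eauto.
    + destruct (fresh_rank_onto _ HK) as [k [_ ?]]; eauto.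
Qed.

End Representatives.

Lemma pow_half_pos k : 0 < (/2)^k.
Proof. apply pow_lt; lra. Qed.

Lemma pow_half_lt n k : (n < k)%nat -> (/2)^k < (/2)^n.
Proof.
  intro H; rewrite !pow_inv; apply Rinv_lt_contravar.
  - apply Rmult_lt_0_compat; apply pow_lt; lra.
  - apply Rlt_pow; [lra|exact H].
Qed.

Lemma pow_half_le n k : (n <= k)%nat -> (/2)^k <= (/2)^n.
Proof.
  intro H; destruct (Nat.eq_dec n k) as [->|Hne]; [lra|].
  left; apply pow_half_lt; lia.
Qed.

Lemma pow_half_lt_eps eps : 0 < eps -> exists n, (/2)^n < eps.
Proof.
  intro Heps; destruct (pow_lt_1_zero (/2) ltac:(rewrite Rabs_pos_eq; lra) eps Heps) as [n Hn].
  exists n; specialize (Hn n (le_n n)).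
  rewrite Rabs_pos_eq in Hn by apply Rlt_le, pow_half_pos; exact Hn.
Qed.

Lemma is_series_pow_half : is_series (fun k => (/2)^k) 2.
Proof.
  assert (H := is_series_geom (/2) ltac:(rewrite Rabs_pos_eq; lra)).
  replace (/ (1 - /2)) with 2 in H by field; exact H.
Qed.

Section HalfDominatedSeries.
Variable a : nat -> R.
Hypothesis a_bounds : forall k, 0 <= a k <= (/2)^k.

Lemma ex_series_half_dominated : ex_series a.
Proof.
  apply (ex_series_le a (fun k => (/2)^k)).
  - intro n; change (norm (a n)) with (Rabs (a n)); rewrite Rabs_pos_eq; apply a_bounds.
  - eexists; apply is_series_pow_half.
Qed.

Lemma Series_ge_term k : a k <= Series a.
Proof.
  rewrite (Series_incr_n a (S k)); [|lia|apply ex_series_half_dominated]; simpl pred.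
  assert (a k <= sum_f_R0 a k).
  { destruct k; simpl; [lra|].
    pose proof (cond_pos_sum a k (fun n => proj1 (a_bounds n))); lra. }
  assert (0 <= Series (fun j => a (S k + j))).
  { replace 0 with (Series (fun j => 0 * a (S k + j))) by (rewrite Series_scal_l; ring).
    apply Series_le; [intro j; rewrite Rmult_0_l; split; [lra|apply a_bounds]|].
    apply (ex_series_incr_n a (S k)), ex_series_half_dominated. }
  lra.
Qed.

Lemma Series_le_pow_half K : (forall k, (k <= K)%nat -> a k = 0) -> Series a <= (/2)^K.
Proof.
  intro Hzero; rewrite (Series_incr_n_aux a (S K)) by (intros; apply Hzero; lia).
  apply Rle_trans with (Series (fun j => (/2)^(S K) * (/2)^j)).
  - apply Series_le.
    + intro n; rewrite <- pow_add; apply a_bounds.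
    + eexists; exact (is_series_scal_l ((/2)^(S K)) _ _ is_series_pow_half).
  - rewrite Series_scal_l, (is_series_unique (pow (/2)) _ is_series_pow_half).
    simpl; lra.
Qed.

End HalfDominatedSeries.

Lemma sat_FIff Atm Ag (M : model Atm Ag) s f g : sat M s (FIff f g) -> (sat M s f <-> sat M s g).
Proof. simpl; intros [H1 H2]; split; intro H; apply NNPP; intro C; [apply H1|apply H2]; auto. Qed.

Section HalfWeightedMetric.
Variables (Atm Ag : Type) (len : option nat) (phi : nat -> form Atm Ag).

Let terms (x y : pointed Atm Ag) k :=
  if validb len k then (/2)^k * dk x y (phi k) else 0.

Lemma terms_bounds x y k : 0 <= terms x y k <= (/2)^k.
Proof.
  unfold terms, dk; pose proof (pow_half_pos k).
  destruct (validb len k); [|lra]; destruct (excluded_middle_informative _); lra.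
Qed.

Lemma dw_half_ge {x y k} : validb len k = true -> ~ (psat x (phi k) <-> psat y (phi k)) ->
  (/2)^k <= dw len phi (fun k => (/2)^k) x y.
Proof.
  intros Hk Hdis; apply Rle_trans with (terms x y k); [|exact (Series_ge_term _ (terms_bounds x y) k)].
  unfold terms, dk; rewrite Hk; destruct (excluded_middle_informative _); [contradiction|lra].
Qed.

Lemma dw_half_le x y K :
  (forall k, (k <= K)%nat -> validb len k = true -> (psat x (phi k) <-> psat y (phi k))) ->
  dw len phi (fun k => (/2)^k) x y <= (/2)^K.
Proof.
  intro Hagree; apply (Series_le_pow_half _ (terms_bounds x y)); intros k Hk.
  unfold terms, dk; destruct (validb len k) eqn:Hv; auto.
  destruct (excluded_middle_informative _) as [_|C]; [ring|exfalso; auto].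
Qed.

(* Bisimilarity up to the largest modal depth among [phi 0 .. phi K] forces agreement on all of them. *)
Lemma dB_ball_in_dw_half_ball K : exists m, forall x y : pointed Atm Ag,
  pnbisim m x y -> dw len phi (fun k => (/2)^k) x y <= (/2)^K.
Proof.
  destruct (prefix_upper_bound (fun k => depth (phi k)) K) as [m Hm]; exists m.
  intros x y Hxy; apply dw_half_le; intros k Hk _; exact (nbisim_sat (phi k) (Hm k Hk) Hxy).
Qed.

End HalfWeightedMetric.

Section BisimulationMetric.
Variables (Atm Ag : Type).

Lemma least_witness (P : nat -> Prop) n : P n -> exists m, P m /\ forall k, (k < m)%nat -> ~ P k.
Proof.
  induction n as [n IH] using lt_wf_ind; intro Hn.
  destruct (classic (exists k, (k < n)%nat /\ P k)) as [[k [Hk Pk]]|H].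
  - exact (IH k Hk Pk).
  - exists n; split; auto; intros k Hk Pk; apply H; eauto.
Qed.

Lemma least_non_bisim_spec (x y : pointed Atm Ag) : ~ (forall n, pnbisim n x y) ->
  ~ pnbisim (least_non_bisim x y) x y /\ forall m, (m < least_non_bisim x y)%nat -> pnbisim m x y.
Proof.
  intro H; unfold least_non_bisim; apply epsilon_spec.
  apply not_all_ex_not in H; destruct H as [n Hn].
  destruct (least_witness (fun n => ~ pnbisim n x y) n Hn) as [m [H1 H2]].
  exists m; split; auto; intros k Hk; apply NNPP, H2, Hk.
Qed.

Lemma dB_lt_pow_half n (x y : pointed Atm Ag) : dB x y < (/2)^n <-> pnbisim n x y.
Proof.
  unfold dB; destruct (excluded_middle_informative _) as [Hall|Hnot].
  - split; [intros _; apply Hall|intros _; apply pow_half_pos].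
  - destruct (least_non_bisim_spec x y Hnot) as [Hleast Hbelow]; split.
    + intro H; destruct (Nat.lt_ge_cases n (least_non_bisim x y)) as [h|h]; [exact (Hbelow n h)|].
      pose proof (pow_half_le h); lra.
    + intro Hb; destruct (Nat.lt_ge_cases n (least_non_bisim x y)) as [h|h]; [apply pow_half_lt, h|].
      exfalso; apply Hleast; eapply nbisim_le; [exact h|exact Hb].
Qed.

End BisimulationMetric.

Lemma same_topology_intro Atm Ag (X : pointed Atm Ag -> Prop) d1 d2 :
  (forall x eps, X x -> 0 < eps -> exists delta, 0 < delta /\
     forall y, X y -> d2 x y < delta -> d1 x y < eps) ->
  (forall x eps, X x -> 0 < eps -> exists delta, 0 < delta /\
     forall y, X y -> d1 x y < delta -> d2 x y < eps) ->
  same_topology X d1 d2.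
Proof.
  intros H21 H12 U; unfold open_in; split; intros [HUX HU]; split; auto;
    intros x Ux; destruct (HU x Ux) as [eps [Heps Hball]].
  - destruct (H21 x eps (HUX x Ux) Heps) as [delta [Hdelta Hin]].
    exists delta; split; auto.
  - destruct (H12 x eps (HUX x Ux) Heps) as [delta [Hdelta Hin]].
    exists delta; split; auto.
Qed.

Section CharacteristicEnumeration.
Variables (Atm Ag : Type) (la : list Atm) (lg : list Ag).
Hypotheses (Hla : forall p, In p la) (Hlg : forall i, In i lg).
Variables (X : pointed Atm Ag -> Prop) (len : option nat) (phi : nat -> form Atm Ag).
Hypothesis phi_char : forall n chi, In chi (char_forms la lg n) ->
  exists j, validb len j = true /\ forall z, X z -> (psat z chi <-> psat z (phi j)).

Lemma char_forms_determine psi : exists D : list nat,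
  (forall k, In k D -> validb len k = true) /\
  forall x y, X x -> X y -> (forall k, In k D -> (psat x (phi k) <-> psat y (phi k))) ->
    (psat x psi <-> psat y psi).
Proof.
  destruct (list_choice (fun chi j => validb len j = true /\
              forall z, X z -> (psat z chi <-> psat z (phi j))) (char_forms la lg (depth psi)))
    as [D [Hvalid Hrep]]; [exact (phi_char (depth psi))|].
  exists D; split.
  - intros j Hj; destruct (Hvalid j Hj) as [? [_ [? _]]]; auto.
  - intros x y Hx Hy Hagree.
    destruct (char_forms_cover la lg (depth psi) (ppt x)) as [chi [Hchi Hxchi]].
    destruct (Hrep chi Hchi) as [j [HjD [_ Hj]]].
    assert (Hychi : psat y chi) by (apply Hj, Hagree, Hj; auto).
    apply (nbisim_sat psi (le_n _)), (char_forms_nbisim _ _ Hla Hlg Hchi Hxchi Hychi).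
Qed.

Lemma dw_half_ball_in_dB_ball n x : X x -> exists j, forall y, X y ->
  dw len phi (fun k => (/2)^k) x y < (/2)^j -> pnbisim n x y.
Proof.
  intro Hx; destruct (char_forms_cover la lg n (ppt x)) as [chi [Hchi Hxchi]].
  destruct (phi_char _ _ Hchi) as [j [Hj Hrep]]; exists j; intros y Hy Hd.
  apply (char_forms_nbisim _ _ Hla Hlg Hchi Hxchi).
  apply Hrep; auto; apply NNPP; intro Hy'.
  assert (Hdis : ~ (psat x (phi j) <-> psat y (phi j))).
  { rewrite <- (Hrep x Hx); tauto. }
  pose proof (dw_half_ge len phi Hj Hdis); lra.
Qed.

End CharacteristicEnumeration.

Theorem proposition5 (Atm Ag : Type)
  (Hatm : exists l : list Atm, forall p : Atm, In p l)
  (Hag : exists l : list Ag, forall i : Ag, In i l)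
  (L : form Atm Ag -> Prop) (HL : normal_logic L)
  (X : pointed Atm Ag -> Prop)
  (Hsound : forall x, X x -> forall f, L f -> psat x f)
  (Hmb : forall x y, X x -> X y -> (modeq x y <-> bisimilar x y)) :
  exists d : pointed Atm Ag -> pointed Atm Ag -> R,
    in_metric_family L X d /\ same_topology X d (@dB Atm Ag).
Proof.
  destruct Hatm as [la Hla], Hag as [lg Hlg].
  pose (agree f g := forall z, X z -> (psat z f <-> psat z g)).
  pose (e k := let (n, i) := Cantor.of_nat k in nth i (char_forms la lg n) (FTop Atm Ag)).
  destruct (@representatives _ agree) with (e := e) as [len [phi [Hdistinct Hcover]]];
    [firstorder..|].
  assert (phi_char : forall n chi, In chi (char_forms la lg n) ->
            exists j, validb len j = true /\ agree chi (phi j)).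
  { intros n chi Hchi; destruct (In_nth _ _ (FTop Atm Ag) Hchi) as [i [_ Hi]].
    destruct (Hcover (Cantor.to_nat (n, i))) as [j Hj]; exists j.
    unfold e in Hj; rewrite Cantor.cancel_of_to, Hi in Hj; exact Hj. }
  exists (dw len phi (fun k => (/2)^k)); split.
  - exists len, phi, (fun k => (/2)^k); repeat split.
    + intros j k Hj Hk Hjk HLjk; apply (Hdistinct j k Hj Hk Hjk).
      intros z Hz; apply sat_FIff, Hsound; auto.
    + apply (char_forms_determine _ _ Hla Hlg _ _ _ phi_char).
    + intros k _; apply pow_half_pos.
    + apply ex_series_half_dominated; intro k.
      pose proof (pow_half_pos k); destruct (validb len k); lra.
  - apply same_topology_intro; intros x eps Hx Heps; destruct (pow_half_lt_eps Heps) as [n Hn].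
    + destruct (dB_ball_in_dw_half_ball len phi n) as [m Hm].
      exists ((/2)^m); split; [apply pow_half_pos|]; intros y _ Hy.
      apply Rle_lt_trans with ((/2)^n); auto; apply Hm, dB_lt_pow_half, Hy.
    + destruct (dw_half_ball_in_dB_ball _ _ Hla Hlg _ _ _ phi_char n x Hx) as [j Hj].
      exists ((/2)^j); split; [apply pow_half_pos|]; intros y Hy Hd.
      apply Rlt_trans with ((/2)^n); auto; apply dB_lt_pow_half, Hj; auto.
Qed.
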